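(* (Compactness Extrapolation Lemma.) Fix a dimension $d\geq1$ and real numbers $s_0<s_1$. Let $(u^\varepsilon)_{\varepsilon\in(0,1]}$ be a family of functions bounded in $\dot H^{s_0}\cap\dot H^{s_1}(\mathbb{R}^d)$ uniformly in $\varepsilon\in(0,1]$, and assume $u^\varepsilon\to u$ in $\dot H^{s_0}(\mathbb{R}^d)$ as $\varepsilon\to0$. Then $u^\varepsilon\to u$ in $\dot H^{s_1}(\mathbb{R}^d)$ if and only if $$\lim_{\varepsilon\to0}\|\mathds{1}_{|D|\geq\Theta_\varepsilon}u^\varepsilon\|_{\dot H^{s_1}}=0$$ for some $\Theta_\varepsilon>0$ satisfying $$\lim_{\varepsilon\to0}\Theta_\varepsilon=\infty\quad\text{and}\quad\lim_{\varepsilon\to0}\Theta_\varepsilon^{s_1-s_0}\|u^\varepsilon-u\|_{\dot H^{s_0}}=0.$$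
   Context: $\dot H^s(\mathbb{R}^d)$ denotes the homogeneous Sobolev space with norm $\||D|^s f\|_{L^2}$. For a bounded function $m$, $m(D)f=\mathcal{F}^{-1}(m(\xi)\mathcal{F}f(\xi))$; in particular $\mathds{1}_{|D|\geq\Theta}$ is the Fourier multiplier by the indicator of $\{|\xi|\geq\Theta\}$. *)

From HB Require Import structures.
From mathcomp Require Import all_boot all_order all_algebra.
From mathcomp Require Import all_classical all_reals all_analysis.
Set Implicit Arguments. Unset Strict Implicit. Unset Printing Implicit Defensive.
Import Order.TTheory GRing.Theory Num.Theory.
Import numFieldNormedType.Exports.
Local Open Scope classical_set_scope.
Local Open Scope ring_scope.

Record mspace (R : realType) := MSpace {
  ms_disp : measure_display;
  ms_car : measurableType ms_disp;
  ms_mu : {measure set ms_car -> \bar R} }.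

(* Rd_aux n models R^(n+1) = R * R * ... * R (left-nested pairs), equipped with
   the Lebesgue measure built as iterated product measure
   (lebesgue_measure on R, then  mu_n \x lebesgue_measure). *)
Fixpoint Rd_aux (R : realType) (n : nat) : mspace R :=
  match n with
  | 0 => @MSpace R _ (measurableTypeR R)
           (lebesgue_measure : {measure set (measurableTypeR R) -> \bar R})
  | n'.+1 => let X := Rd_aux R n' in
      @MSpace R _ (ms_car X * measurableTypeR R)%type
        (((ms_mu X) \x (lebesgue_measure : {measure set (measurableTypeR R) -> \bar R}))%E
           : {measure set (ms_car X * measurableTypeR R)%type -> \bar R})
  end.

Fixpoint sqnorm_aux (R : realType) (n : nat) : ms_car (Rd_aux R n) -> R :=
  match n return ms_car (Rd_aux R n) -> R with
  | 0 => fun x => x ^+ 2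
  | n'.+1 => fun x => sqnorm_aux x.1 + x.2 ^+ 2
  end.

(* R^d for d >= 1 (the value at d = 0 is irrelevant: the theorem assumes d >= 1). *)
Definition Rd (R : realType) (d : nat) : mspace R := Rd_aux R d.-1.
Definition Rdt (R : realType) (d : nat) : Type := ms_car (Rd R d).
Definition leb_d (R : realType) (d : nat) := ms_mu (Rd R d).

Definition eucl (R : realType) (d : nat) (xi : Rdt R d) : R :=
  Num.sqrt (@sqnorm_aux R d.-1 xi).

(* Functions are represented through their Fourier transforms,
   complex-valued functions on R^d encoded as (real part, imaginary part). *)
Definition fou (R : realType) (d : nat) := Rdt R d -> (R * R)%type.

Definition cabs (R : realType) (z : R * R) : R := Num.sqrt (z.1 ^+ 2 + z.2 ^+ 2).

Definition fsub (R : realType) (d : nat) (f g : fou R d) : fou R d :=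
  fun xi => (f xi - g xi)%R.

(* Homogeneous Sobolev norm || |D|^s f ||_{L^2} computed on the Fourier side
   (Plancherel): the L^2 norm of  xi |-> |xi|^s |\hat f(xi)|. *)
Definition Hnorm (R : realType) (d : nat) (s : R) (fh : fou R d) : \bar R :=
  Lnorm (leb_d R d) 2%:E (fun xi => ((eucl xi) `^ s * cabs (fh xi))%:E).

Definition inHdot (R : realType) (d : nat) (s : R) (fh : fou R d) : Prop :=
  measurable_fun [set: Rdt R d] (fun xi => (fh xi).1) /\
  measurable_fun [set: Rdt R d] (fun xi => (fh xi).2) /\
  (Hnorm s fh < +oo)%E.

Definition hicut (R : realType) (d : nat) (Theta : R) (fh : fou R d) : fou R d :=
  fun xi => if Theta <= eucl xi then fh xi else 0.

(* Work on the Fourier side with the squared norms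
   [Hsq s f = \int |xi|^(2 s) |f xi|^2] and cut frequencies at Theta.
   Below Theta, |xi|^(2 s1) <= Theta^(2 (s1 - s0)) |xi|^(2 s0), so the low part of
   u^e - u in \dot H^s1 is controlled by Theta^(s1 - s0) ||u^e - u||_{\dot H^s0};
   above Theta, |u^e - u|^2 <= 2 |u^e|^2 + 2 |u|^2, and the high part of u tends to 0
   because u lies in \dot H^s1, which follows from the uniform bound on u^e by
   monotone convergence over the low-frequency cuts of u.
   Conversely, if u^e -> u in \dot H^s1, take
   Theta_e = (a_e + e)^(-1/(4 (s1 - s0))) with a_e = ||u^e - u||^2_{\dot H^s0}:
   then Theta_e -> +oo, Theta_e^(2 (s1 - s0)) a_e <= (a_e + e)^(1/2) -> 0, and the high
   part of u^e is controlled by ||u^e - u||_{\dot H^s1} and the high part of u. *)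

From HB Require Import structures.
From mathcomp Require Import all_boot all_order all_algebra.
From mathcomp Require Import all_classical all_reals all_analysis.
From mathcomp Require Import measurable_realfun.
From mathcomp Require Import ring lra.
Import Order.TTheory GRing.Theory Num.Theory.
Import numFieldNormedType.Exports.
Local Open Scope classical_set_scope.
Local Open Scope ring_scope.
Set Implicit Arguments. Unset Strict Implicit. Unset Printing Implicit Defensive.

Section EuclideanNorm.
Variable R : realType.

Lemma sqnorm_aux_ge0 n (x : ms_car (Rd_aux R n)) : 0 <= sqnorm_aux x.
Proof.
elim: n x => [|n IH] x /=; first exact: sqr_ge0.
by rewrite addr_ge0 ?sqr_ge0.
Qed.

Lemma measurable_sqnorm_aux n : measurable_fun setT (@sqnorm_aux R n).
Proof.
elim: n => [|n IH] /=; first exact: exprn_measurable.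
apply: measurable_funD; first exact: measurableT_comp IH measurable_fst.
by apply: measurable_funX; exact: measurable_snd.
Qed.

Definition last_coord0 n : set (ms_car (Rd_aux R n)) :=
  match n with
  | 0 => [set 0]
  | n'.+1 => [set: ms_car (Rd_aux R n')] `*` [set 0]
  end.
Arguments last_coord0 : clear implicits.

Lemma measurable_last_coord0 n : measurable (last_coord0 n).
Proof.
case: n => [|n] /=; first exact: measurable_set1.
by apply: measurableX => //; exact: measurable_set1.
Qed.

Lemma last_coord0_null n : ms_mu (Rd_aux R n) (last_coord0 n) = 0%E.
Proof.
case: n => [|n] /=; first exact: lebesgue_measure_set1.
rewrite product_measure1E; [|done|exact: measurable_set1].
by rewrite [X in (_ * X)%E]lebesgue_measure_set1 mule0.
Qed.

Lemma sqnorm_aux_eq0 n (x : ms_car (Rd_aux R n)) : sqnorm_aux x = 0 -> last_coord0 n x.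
Proof.
case: n x => [|n] x /=; first by move/eqP; rewrite sqrf_eq0 => /eqP.
move=> x0; split => //=; apply/eqP; rewrite -sqrf_eq0 eq_le sqr_ge0 andbT.
by rewrite -x0 lerDr sqnorm_aux_ge0.
Qed.

Lemma measurable_eucl d : measurable_fun setT (@eucl R d).
Proof.
apply: measurableT_comp (continuous_measurable_fun (@sqrt_continuous R)) _.
exact: measurable_sqnorm_aux.
Qed.

Lemma ae_eucl_gt0 d : {ae leb_d R d, forall x : Rdt R d, 0 < eucl x}.
Proof.
exists (last_coord0 d.-1); split; [exact: measurable_last_coord0|exact: last_coord0_null|].
move=> x /= /negP; rewrite -leNgt => x_le0; apply: sqnorm_aux_eq0.
apply/eqP; rewrite eq_le sqnorm_aux_ge0 andbT -sqrtr_eq0.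
by rewrite eq_le x_le0 sqrtr_ge0.
Qed.

End EuclideanNorm.

Section ComplexModulus.
Variable R : realType.
Implicit Types z w : R * R.

Lemma cabs_sqr z : cabs z ^+ 2 = z.1 ^+ 2 + z.2 ^+ 2.
Proof. by rewrite /cabs sqr_sqrtr // addr_ge0 ?sqr_ge0. Qed.

Lemma cabs0 : cabs (0 : R * R) = 0.
Proof. by rewrite /cabs /= expr0n /= addr0 sqrtr0. Qed.

Lemma cabsN z : cabs (- z) = cabs z.
Proof. by rewrite /cabs /= !sqrrN. Qed.

Lemma cabsD_sqr_le z w : cabs (z + w) ^+ 2 <= 2 * (cabs z ^+ 2 + cabs w ^+ 2).
Proof.
rewrite !cabs_sqr /=.
have := sqr_ge0 (z.1 - w.1); have := sqr_ge0 (z.2 - w.2); nra.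
Qed.

Lemma cabsB_sqr_le z w : cabs (z - w) ^+ 2 <= 2 * (cabs z ^+ 2 + cabs w ^+ 2).
Proof. by rewrite -(cabsN w) cabsD_sqr_le. Qed.

End ComplexModulus.

Section NonnegConvergence.
Variable R : realType.

Lemma cvge0_leP {T} {F : set_system T} {FF : Filter F} (x : T -> \bar R) :
  (forall t, 0 <= x t)%E ->
  x t @[t --> F] --> 0%E <->
  (forall eps, 0 < eps -> \forall t \near F, (x t <= eps%:E)%E).
Proof.
move=> x0; split.
  move/fine_cvgP => [x_fin x_0] eps eps0.
  move/cvgr0Pnorm_le : x_0 => /(_ eps eps0).
  apply: filterS2 x_fin => t x_fin_t x_le.
  by rewrite -(fineK x_fin_t) lee_fin (le_trans (ler_norm _) x_le).
move=> x_small; apply/fine_cvgP; split.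
  apply: filterS (x_small 1 ltr01) => t x_le1.
  by rewrite ge0_fin_numE // (le_lt_trans x_le1 (ltry _)).
apply/cvgr0Pnorm_le => eps eps0; apply: filterS (x_small eps eps0) => t /=.
by move: (x0 t); case: (x t) => [r| |] //=; rewrite !lee_fin => r0 r_le; rewrite ger0_norm.
Qed.

Lemma lee_poweR2 (x : \bar R) (eps : R) : (0 <= x)%E -> 0 <= eps ->
  (x `^ 2 <= (eps ^+ 2)%:E)%E = (x <= eps%:E)%E.
Proof.
case: x => [r| |] // r0 eps0; last by rewrite poweRyr // !leye_eq.
by rewrite poweR_EFin !lee_fin -[2]/(2%:R) powR_mulrn // ler_sqr.
Qed.

Lemma cvge0_poweR2P {T} {F : set_system T} {FF : Filter F} (x : T -> \bar R) :
  (forall t, 0 <= x t)%E ->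
  x t @[t --> F] --> 0%E <-> (x t `^ 2)%E @[t --> F] --> 0%E.
Proof.
move=> x0; rewrite !cvge0_leP // => [|t]; last exact: poweR_ge0.
split=> x_small eps eps0.
  have sqrt_eps0 : 0 < Num.sqrt eps by rewrite sqrtr_gt0.
  apply: filterS (x_small _ sqrt_eps0) => t.
  by rewrite -(lee_poweR2 (x0 t)) ?sqrtr_ge0 // sqr_sqrtr // (ltW eps0).
apply: filterS (x_small _ (exprn_gt0 2 eps0)) => t.
by rewrite lee_poweR2 // (ltW eps0).
Qed.

End NonnegConvergence.

Section SlowBlowup.
Variable R : realType.

Lemma powRN_cvgy (p : R) : 0 < p -> r `^ (- p) @[r --> 0^'+] --> +oo.
Proof.
move=> p0; under eq_fun do rewrite powRN.
apply/cvgrVy; last exact: powR_cvg0.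
by near=> r; rewrite powR_gt0.
Unshelve. all: by end_near. Qed.

Lemma cvg_at_right0 {T} {F : set_system T} {FF : Filter F} (f : T -> R) :
  (\forall t \near F, 0 < f t) -> f t @[t --> F] --> 0 -> f t @[t --> F] --> 0^'+.
Proof.
move=> f_gt0 f_0 A [eps /= eps0 epsA].
have := f_0 _ (nbhsx_ballx 0 eps eps0).
by apply: filterS2 f_gt0 => t ft_gt0 ft_near; apply: epsA.
Qed.

Lemma slow_blowup (delta : R) (a : R -> R) :
  0 < delta -> (forall e, 0 <= a e) -> a e @[e --> 0^'+] --> 0 ->
  exists Theta : R -> R, (forall e, 0 < e -> 0 < Theta e) /\
    Theta e @[e --> 0^'+] --> +oo /\
    (Theta e `^ delta) ^+ 2 * a e @[e --> 0^'+] --> 0.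
Proof.
move=> delta0 a0 a_0.
pose r e := a e + e.
have r_gt0 e : 0 < e -> 0 < r e by move=> e0; rewrite ltr_wpDl.
have r_0 : r e @[e --> 0^'+] --> 0.
  rewrite -[X in _ --> X]addr0; apply: cvgD => //.
  exact: cvg_at_right_filter cvg_id.
exists (fun e => r e `^ (- (4 * delta)^-1)); split; [|split].
- by move=> e e0; exact/powR_gt0/r_gt0.
- apply: (cvg_comp r (fun x => x `^ _)); last by apply: powRN_cvgy; rewrite invr_gt0 mulr_gt0.
  apply: cvg_at_right0 r_0; near=> e; apply: r_gt0.
  by near: e; exact: nbhs_right_gt.
- have sqrt_r : Num.sqrt (r e) @[e --> 0^'+] --> 0.
    rewrite -[X in _ --> X]sqrtr0.
    exact: (continuous_cvg _ (@sqrt_continuous R 0) r_0).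
  apply: (squeeze_cvgr _ (cvg_cst 0) sqrt_r).
  near=> e; have e0 : 0 < e by near: e; exact: nbhs_right_gt.
  have r_pos := r_gt0 e e0.
  have -> : (r e `^ (- (4 * delta)^-1) `^ delta) ^+ 2 = (Num.sqrt (r e))^-1.
    rewrite -powRrM -powR_mulrn ?powR_ge0 // -powRrM.
    rewrite (_ : _ * _ * _ = - 2^-1); first by rewrite powRN powR12_sqrt ?(ltW r_pos).
    by field; rewrite gt_eqF.
  rewrite mulr_ge0 ?invr_ge0 ?sqrtr_ge0 //= ler_pdivrMl ?sqrtr_gt0 //.
  by rewrite -expr2 sqr_sqrtr ?(ltW r_pos) // lerDl (ltW e0).
Unshelve. all: by end_near. Qed.

End SlowBlowup.

Section FourierSide.
Variables (R : realType) (d : nat).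
Implicit Types (s t : R) (f g h : fou R d) (P : Rdt R d -> bool).

Definition measurable_fou f :=
  measurable_fun [set: Rdt R d] (fun x => (f x).1) /\
  measurable_fun [set: Rdt R d] (fun x => (f x).2).

Lemma measurable_fou_fsub f g :
  measurable_fou f -> measurable_fou g -> measurable_fou (fsub f g).
Proof. by move=> [f1 f2] [g1 g2]; split; apply: measurable_funB. Qed.

Definition fcut P f : fou R d := fun x => if P x then f x else 0.

Definition locut t : fou R d -> fou R d := fcut (fun x => ~~ (t <= eucl x)).

Lemma hicutE t f : hicut t f = fcut (fun x => t <= eucl x) f.
Proof. by []. Qed.

Lemma measurable_eucl_ge t : measurable_fun setT (fun x : Rdt R d => t <= eucl x).
Proof. by apply: measurable_fun_ler => //; exact: measurable_eucl. Qed.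

Lemma measurable_fou_fcut P f :
  measurable_fun setT P -> measurable_fou f -> measurable_fou (fcut P f).
Proof.
move=> mP [f1 f2]; rewrite /fcut; split.
- under eq_fun do rewrite (fun_if fst).
  exact: measurable_fun_ifT.
- under eq_fun do rewrite (fun_if snd).
  exact: measurable_fun_ifT.
Qed.

Lemma measurable_fou_hicut t f : measurable_fou f -> measurable_fou (hicut t f).
Proof. exact: measurable_fou_fcut (measurable_eucl_ge t). Qed.

Lemma measurable_fou_locut t f : measurable_fou f -> measurable_fou (locut t f).
Proof. exact: measurable_fou_fcut (measurable_neg (measurable_eucl_ge t)). Qed.

Lemma fcutB P f g x : fcut P (fsub f g) x = fcut P f x - fcut P g x.
Proof. by rewrite /fcut /fsub; case: ifP; rewrite ?subr0. Qed.

Definition Hdens s f x := eucl x `^ s * cabs (f x).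

Definition Hsq s f := (\int[leb_d R d]_x (Hdens s f x ^+ 2)%:E)%E.

Lemma Hdens_ge0 s f x : 0 <= Hdens s f x.
Proof. by rewrite mulr_ge0 ?powR_ge0 ?sqrtr_ge0. Qed.

Lemma Hdens_fcut s P f x : Hdens s (fcut P f) x = if P x then Hdens s f x else 0.
Proof. by rewrite /Hdens /fcut; case: ifP; rewrite ?cabs0 ?mulr0. Qed.

Lemma measurable_Hdens_sqr s f :
  measurable_fou f -> measurable_fun setT (fun x => Hdens s f x ^+ 2).
Proof.
move=> [f1 f2]; apply/measurable_funX/measurable_funM.
  apply: (measurableT_comp (f := fun r : R => r `^ s)); last exact: measurable_eucl.
  exact: measurable_powR.
apply: measurableT_comp (continuous_measurable_fun (@sqrt_continuous R)) _.
by apply: measurable_funD; apply: measurable_funX.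
Qed.

Lemma Hsq_ge0 s f : (0 <= Hsq s f)%E.
Proof. by apply: integral_ge0 => x _; rewrite lee_fin sqr_ge0. Qed.

Lemma Hnorm_sqr s f : (Hnorm s f `^ 2 = Hsq s f)%E.
Proof.
rewrite /Hnorm poweR_Lnorm //; apply: eq_integral => x _.
by rewrite poweR_EFin /= ger0_norm ?Hdens_ge0 // -[2]/(2%:R) powR_mulrn ?Hdens_ge0.
Qed.

Lemma Hsq_le_lincomb s s' s'' (a b : R) f g h :
  0 <= a -> 0 <= b -> measurable_fou f -> measurable_fou g -> measurable_fou h ->
  {ae leb_d R d, forall x, Hdens s f x ^+ 2 <=
                           a * Hdens s' g x ^+ 2 + b * Hdens s'' h x ^+ 2} ->
  (Hsq s f <= a%:E * Hsq s' g + b%:E * Hsq s'' h)%E.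
Proof.
move=> a0 b0 mf mg mh fgh.
have [mg2 mh2] := (measurable_Hdens_sqr s' mg, measurable_Hdens_sqr s'' mh).
rewrite /Hsq -!ge0_integralZl_EFin //;
  try by [move=> x _; rewrite lee_fin sqr_ge0 | exact/measurable_EFinP].
rewrite -ge0_integralD //; try by [
  move=> x _; rewrite -EFinM lee_fin mulr_ge0 ?sqr_ge0 |
  apply/measurable_EFinP; exact: measurable_funM].
apply: ae_ge0_le_integral => //.
- by move=> x _; rewrite lee_fin sqr_ge0.
- exact/measurable_EFinP/measurable_Hdens_sqr.
- by move=> x _; rewrite -!EFinM adde_ge0 // lee_fin mulr_ge0 ?sqr_ge0.
- under eq_fun do rewrite -!EFinM -EFinD.
  apply/measurable_EFinP; apply: measurable_funD; exact: measurable_funM.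
- by apply: filterS fgh => x fgh_x _; rewrite -!EFinM -EFinD lee_fin.
Qed.

Lemma Hsq_le_scale s s' (a : R) f g :
  0 <= a -> measurable_fou f -> measurable_fou g ->
  {ae leb_d R d, forall x, Hdens s f x ^+ 2 <= a * Hdens s' g x ^+ 2} ->
  (Hsq s f <= a%:E * Hsq s' g)%E.
Proof.
move=> a0 mf mg fg; rewrite -[X in (_ <= X)%E]adde0 -(mul0e (Hsq s' g)).
by apply: Hsq_le_lincomb => //; apply: filterS fg => x; rewrite mul0r addr0.
Qed.

Lemma Hsq_quasi_triangle s f g h :
  measurable_fou f -> measurable_fou g -> measurable_fou h ->
  (forall x, cabs (f x) ^+ 2 <= 2 * (cabs (g x) ^+ 2 + cabs (h x) ^+ 2)) ->
  (Hsq s f <= 2%:E * Hsq s g + 2%:E * Hsq s h)%E.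
Proof.
move=> mf mg mh fgh; apply: Hsq_le_lincomb => //; apply: nearW => x.
have := ler_wpM2l (sqr_ge0 (eucl x `^ s)) (fgh x).
by rewrite /Hdens !exprMn; lra.
Qed.

Lemma Hsq_fcut_split s P f : measurable_fun setT P -> measurable_fou f ->
  Hsq s f = (Hsq s (fcut P f) + Hsq s (fcut (fun x => ~~ P x) f))%E.
Proof.
move=> mP mf.
have mPf := measurable_Hdens_sqr s (measurable_fou_fcut mP mf).
have mNPf := measurable_Hdens_sqr s (measurable_fou_fcut (measurable_neg mP) mf).
rewrite /Hsq -ge0_integralD //; try by [
  move=> x _; rewrite lee_fin sqr_ge0 | exact/measurable_EFinP].
apply: eq_integral => x _; rewrite !Hdens_fcut -EFinD.
by case: (P x); rewrite /= expr0n ?addr0 ?add0r.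
Qed.

Lemma Hsq_hicut_locut s t f : measurable_fou f ->
  Hsq s f = (Hsq s (hicut t f) + Hsq s (locut t f))%E.
Proof. exact: Hsq_fcut_split (measurable_eucl_ge t). Qed.

Lemma Hsq_fcut_le s P f : measurable_fun setT P -> measurable_fou f ->
  (Hsq s (fcut P f) <= Hsq s f)%E.
Proof. by move=> mP mf; rewrite [leRHS](Hsq_fcut_split s mP mf) leeDl ?Hsq_ge0. Qed.

Lemma Hsq_locut_le s t f : measurable_fou f -> (Hsq s (locut t f) <= Hsq s f)%E.
Proof. exact: Hsq_fcut_le (measurable_neg (measurable_eucl_ge t)). Qed.

Lemma Hdens_le_weight s0 s1 t f x : s0 <= s1 -> 0 < eucl x <= t ->
  Hdens s1 f x <= t `^ (s1 - s0) * Hdens s0 f x.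
Proof.
move=> s01 /andP[x0 xt]; rewrite /Hdens mulrA.
apply: (@ler_wpM2r _ (cabs (f x))); first exact: sqrtr_ge0.
have -> : eucl x `^ s1 = eucl x `^ (s1 - s0) * eucl x `^ s0.
  by rewrite -powRD subrK // (gt_eqF x0) implybT.
apply: (@ler_wpM2r _ (eucl x `^ s0)); first exact: powR_ge0.
by rewrite ge0_ler_powR ?subr_ge0 ?nnegrE ?(ltW x0) ?(le_trans (ltW x0) xt).
Qed.

Lemma Hsq_locut_le_weight s0 s1 t f : s0 <= s1 -> measurable_fou f ->
  (Hsq s1 (locut t f) <= ((t `^ (s1 - s0)) ^+ 2)%:E * Hsq s0 f)%E.
Proof.
move=> s01 mf.
apply: Hsq_le_scale; [exact: sqr_ge0|exact: measurable_fou_locut|exact: mf|].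
apply: filterS (ae_eucl_gt0 R d) => x x0; rewrite Hdens_fcut -ltNge.
case: ltP => xt; last by rewrite expr0n mulr_ge0 ?sqr_ge0.
rewrite -exprMn ler_sqr ?nnegrE ?Hdens_ge0 ?(mulr_ge0 (powR_ge0 _ _) (Hdens_ge0 _ _ _)) //.
by apply: Hdens_le_weight => //; rewrite x0 (ltW xt).
Qed.

Lemma Hsq_hicut_antitone s t t' f : t <= t' -> measurable_fou f ->
  (Hsq s (hicut t' f) <= Hsq s (hicut t f))%E.
Proof.
move=> tt' mf; rewrite -[leRHS]mul1e.
apply: Hsq_le_scale => //; try exact: measurable_fou_hicut.
apply: nearW => x; rewrite !hicutE !Hdens_fcut mul1r.
case: ifPn => [t'x|_]; first by rewrite (le_trans tt' t'x).
by rewrite expr0n; case: ifP; rewrite ?sqr_ge0.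
Qed.

Lemma Hsq_locut_cvg s f : measurable_fou f ->
  Hsq s (locut n%:R f) @[n --> \oo] --> Hsq s f.
Proof.
move=> mf; pose g n x := (Hdens s (locut n%:R f) x ^+ 2)%:E.
have mg n : measurable_fun setT (g n).
  exact/measurable_EFinP/measurable_Hdens_sqr/measurable_fou_locut.
have g0 n x : setT x -> (0 <= g n x)%E by rewrite lee_fin sqr_ge0.
have g_nd x : setT x -> nondecreasing_seq (g ^~ x).
  move=> _ m n mn; rewrite /g !Hdens_fcut -!ltNge lee_fin.
  case: ltP => xm; last by case: ifP; rewrite ?expr0n ?sqr_ge0.
  by rewrite (lt_le_trans xm) ?ler_nat.
have := cvg_monotone_convergence (mu := leb_d R d) measurableT mg g0 g_nd.
congr (_ --> _); apply: eq_integral => x _; apply: lim_near_cst => //.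
near=> n; rewrite /g Hdens_fcut -ltNge ifT //.
by near: n; exact: nbhs_infty_gtr.
Unshelve. all: by end_near. Qed.

Lemma Hsq_le_of_locut s f (K : \bar R) : measurable_fou f ->
  (forall n : nat, Hsq s (locut n%:R f) <= K)%E -> (Hsq s f <= K)%E.
Proof.
move=> mf fK; have cvg_f := Hsq_locut_cvg (s := s) mf.
by rewrite -(cvg_lim _ cvg_f) //; apply: lime_le; [exact: cvgP cvg_f|exact: nearW].
Qed.

Lemma Hsq_hicut_cvg0 s f : measurable_fou f -> (Hsq s f < +oo)%E ->
  Hsq s (hicut t f) @[t --> +oo] --> 0%E.
Proof.
move=> mf f_lty; have f_fin : Hsq s f \is a fin_num by rewrite ge0_fin_numE ?Hsq_ge0.
have hicut_nat : Hsq s (hicut n%:R f) @[n --> \oo] --> 0%E.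
  have -> : (fun n : nat => Hsq s (hicut n%:R f)) =
            (fun n => Hsq s f - Hsq s (locut n%:R f))%E.
    apply/funext => n; rewrite (Hsq_hicut_locut s n%:R mf) addeK //.
    by rewrite ge0_fin_numE ?Hsq_ge0 // (le_lt_trans (Hsq_locut_le _ _ mf) f_lty).
  rewrite -(subee f_fin); apply: cvgeB; [|exact: cvg_cst|exact: Hsq_locut_cvg].
  by rewrite fin_num_adde_defl // fin_numN.
apply/cvge0_leP => [t|eps eps0]; first exact: Hsq_ge0.
have [N _ hicutN] := (cvge0_leP (fun n => Hsq_ge0 _ _)).1 hicut_nat eps eps0.
near=> t; apply: le_trans (hicutN N (leqnn N)).
by apply: Hsq_hicut_antitone mf; near: t; exact: nbhs_pinfty_ge.
Unshelve. all: by end_near. Qed.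

Lemma Hnorm_cvg0P {T} {F : set_system T} {FF : Filter F} s (f : T -> fou R d) :
  Hnorm s (f i) @[i --> F] --> 0%E <-> Hsq s (f i) @[i --> F] --> 0%E.
Proof.
rewrite cvge0_poweR2P => [|i]; last exact: Lnorm_ge0.
suff -> : (fun i => Hnorm s (f i) `^ 2)%E = (fun i => Hsq s (f i)) by [].
by apply/funext => i; rewrite Hnorm_sqr.
Qed.

Lemma Hnorm_scale_cvg0P {T} {F : set_system T} {FF : Filter F} s (c : T -> R)
    (f : T -> fou R d) : (forall i, 0 <= c i) ->
  ((c i)%:E * Hnorm s (f i))%E @[i --> F] --> 0%E <->
  ((c i ^+ 2)%:E * Hsq s (f i))%E @[i --> F] --> 0%E.
Proof.
move=> c0; rewrite cvge0_poweR2P => [|i]; last by rewrite mule_ge0 ?lee_fin ?Lnorm_ge0.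
suff -> : (fun i => ((c i)%:E * Hnorm s (f i)) `^ 2)%E =
          (fun i => (c i ^+ 2)%:E * Hsq s (f i))%E by [].
apply/funext => i; rewrite poweRM ?lee_fin ?Lnorm_ge0 // poweR_EFin Hnorm_sqr.
by rewrite -[2]/(2%:R) powR_mulrn.
Qed.

End FourierSide.

Section Extrapolation.
Variables (R : realType) (d : nat) (s0 s1 K : R) (u : R -> fou R d) (v : fou R d).
Hypothesis s01 : s0 < s1.
Hypothesis mv : measurable_fou v.
Hypothesis mu : forall e, 0 < e <= 1 -> measurable_fou (u e).
Hypothesis u_bounded : forall e, 0 < e <= 1 -> (Hsq s1 (u e) <= K%:E)%E.
Hypothesis u_cvg : Hsq s0 (fsub (u e) v) @[e --> 0^'+] --> 0%E.

Let near0_e01 : \forall e \near (0 : R)^'+, 0 < e <= 1.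
Proof.
near=> e; apply/andP; split; near: e; first exact: nbhs_right_gt.
exact: nbhs_right_le ltr01.
Unshelve. all: by end_near. Qed.

Lemma Hsq_limit_finite : (Hsq s1 v < +oo)%E.
Proof.
apply: le_lt_trans (ltry (2 * K + 2 * 1)); apply: (Hsq_le_of_locut (s := s1) mv) => n.
set w := ((n%:R `^ (s1 - s0)) ^+ 2)%:E.
have w_cvg : (w * Hsq s0 (fsub (u e) v))%E @[e --> 0^'+] --> 0%E.
  by rewrite -(mule0 w); exact: cvgeZl.
near (0:R)^'+ => e.
have e01 : 0 < e <= 1 by near: e.
have mue := mu e01.
have muve := measurable_fou_fsub mue mv.
apply: le_trans (Hsq_quasi_triangle s1 (g := locut n%:R (u e))
  (h := locut n%:R (fsub (u e) v)) _ _ _ _) _.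
1-3: exact: measurable_fou_locut.
- move=> x; rewrite (_ : locut _ v x = locut n%:R (u e) x - locut n%:R (fsub (u e) v) x).
    exact: cabsB_sqr_le.
  by rewrite /locut fcutB opprB addrC subrK.
rewrite (EFinD (2 * K)) (EFinM 2 K) (EFinM 2 1).
apply: leeD; apply: lee_wpmul2l; rewrite ?lee_fin //.
- exact: le_trans (Hsq_locut_le _ _ mue) (u_bounded e01).
- apply: le_trans (Hsq_locut_le_weight _ (ltW s01) muve) _.
  near: e; apply: (cvge0_leP _).1 w_cvg _ ltr01 => e.
  by rewrite mule_ge0 ?lee_fin ?sqr_ge0 ?Hsq_ge0.
Unshelve. all: by end_near. Qed.

Lemma extrapolation_sufficient (Theta : R -> R) :
  Theta e @[e --> 0^'+] --> +oo ->
  (((Theta e `^ (s1 - s0)) ^+ 2)%:E * Hsq s0 (fsub (u e) v))%E @[e --> 0^'+] --> 0%E ->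
  Hsq s1 (hicut (Theta e) (u e)) @[e --> 0^'+] --> 0%E ->
  Hsq s1 (fsub (u e) v) @[e --> 0^'+] --> 0%E.
Proof.
move=> Theta_y low_cvg u_high.
have v_high : Hsq s1 (hicut (Theta e) v) @[e --> 0^'+] --> 0%E.
  exact: cvg_comp Theta_y (Hsq_hicut_cvg0 mv Hsq_limit_finite).
have := cvgeD _ low_cvg
  (cvgeD _ (cvgeZl (y := 2%:E) isT u_high) (cvgeZl (y := 2%:E) isT v_high)).
rewrite !mule0 !adde0 => /(_ _ isT _ isT) bound_cvg.
apply: (squeeze_cvge _ (cvg_cst _) bound_cvg).
near=> e; rewrite Hsq_ge0 /=.
have e01 : 0 < e <= 1 by near: e.
have mue := mu e01.
have muve := measurable_fou_fsub mue mv.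
rewrite (Hsq_hicut_locut s1 (Theta e) muve) addeC; apply: leeD.
  exact: Hsq_locut_le_weight _ (ltW s01) muve.
apply: Hsq_quasi_triangle; try exact: measurable_fou_hicut.
by move=> x; rewrite hicutE fcutB; exact: cabsB_sqr_le.
Unshelve. all: by end_near. Qed.

Lemma extrapolation_necessary :
  Hsq s1 (fsub (u e) v) @[e --> 0^'+] --> 0%E ->
  exists Theta : R -> R, (forall e, 0 < e -> 0 < Theta e) /\
    Theta e @[e --> 0^'+] --> +oo /\
    (((Theta e `^ (s1 - s0)) ^+ 2)%:E * Hsq s0 (fsub (u e) v))%E
      @[e --> 0^'+] --> 0%E /\
    Hsq s1 (hicut (Theta e) (u e)) @[e --> 0^'+] --> 0%E.
Proof.
move=> uv_cvg1; have [uv_fin uv_fine] := (fine_cvgP _ _).1 u_cvg.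
have delta0 : 0 < s1 - s0 by rewrite subr_gt0.
have [th [th_gt0 [th_y low_cvg]]] := slow_blowup delta0
  (fun e => fine_ge0 (Hsq_ge0 s0 (fsub (u e) v))) uv_fine.
exists th; split=> //; split=> //; split.
  apply/fine_cvgP; split; first by apply: filterS uv_fin => e; exact: fin_numM.
  apply: cvg_trans low_cvg; apply: near_eq_cvg; apply: filterS uv_fin => e uv_fin_e.
  by rewrite /= fineM.
have v_high : Hsq s1 (hicut (th e) v) @[e --> 0^'+] --> 0%E.
  exact: cvg_comp th_y (Hsq_hicut_cvg0 mv Hsq_limit_finite).
have := cvgeD _ (cvgeZl (y := 2%:E) isT uv_cvg1) (cvgeZl (y := 2%:E) isT v_high).
rewrite !mule0 adde0 => /(_ _ isT) bound_cvg.
apply: (squeeze_cvge _ (cvg_cst _) bound_cvg).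
near=> e; rewrite Hsq_ge0 /=.
have e01 : 0 < e <= 1 by near: e.
have mue := mu e01.
apply: Hsq_quasi_triangle; [exact: measurable_fou_hicut|exact: measurable_fou_fsub|
  exact: measurable_fou_hicut|] => x.
rewrite /hicut /fsub; case: ifP => _; last by rewrite cabs0 expr0n mulr_ge0 ?addr_ge0 ?sqr_ge0.
by rewrite -{1}(subrK (v x) (u e x)); exact: cabsD_sqr_le.
Unshelve. all: by end_near. Qed.

End Extrapolation.

Theorem lemma1p4 (R : realType) (d : nat) (s0 s1 : R)
    (u : R -> fou R d) (v : fou R d) :
  (1 <= d)%N ->
  s0 < s1 ->
  (forall e : R, 0 < e <= 1 -> inHdot s0 (u e) /\ inHdot s1 (u e)) ->
  (exists C : R, forall e : R, 0 < e <= 1 ->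
      (Hnorm s0 (u e) <= C%:E)%E /\ (Hnorm s1 (u e) <= C%:E)%E) ->
  inHdot s0 v ->
  Hnorm s0 (fsub (u e) v) @[e --> 0^'+] --> 0%E ->
  (Hnorm s1 (fsub (u e) v) @[e --> 0^'+] --> 0%E
   <->
   exists Theta : R -> R,
     (forall e : R, 0 < e <= 1 -> 0 < Theta e) /\
     Theta e @[e --> 0^'+] --> +oo /\
     (((Theta e) `^ (s1 - s0))%:E * Hnorm s0 (fsub (u e) v))%E
        @[e --> 0^'+] --> 0%E /\
     Hnorm s1 (hicut (Theta e) (u e)) @[e --> 0^'+] --> 0%E).
Proof.
move=> _ s01 u_in [C u_bd] v_in u_cvg.
have mu e : 0 < e <= 1 -> measurable_fou (u e) by case/u_in => -[mu1 [mu2 _]].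
have mv : measurable_fou v by case: v_in => mv1 [mv2 _].
have u_bd1 e : 0 < e <= 1 -> (Hsq s1 (u e) <= (C ^+ 2)%:E)%E.
  move=> e01; have [u0C u1C] := u_bd e e01.
  have C0 : 0 <= C by rewrite -lee_fin (le_trans (Lnorm_ge0 _ _ _) u1C).
  by rewrite -Hnorm_sqr lee_poweR2 ?Lnorm_ge0.
move/Hnorm_cvg0P: u_cvg => u_cvg; rewrite Hnorm_cvg0P; split.
- move/(extrapolation_necessary s01 mv mu u_bd1 u_cvg) => [th [th_gt0 [th_y [low high]]]].
  exists th; split=> [e /andP[e0 _]|]; first exact: th_gt0.
  split=> //; split; last exact/Hnorm_cvg0P.
  by apply/Hnorm_scale_cvg0P => // e; exact: powR_ge0.
- move=> [th [_ [th_y [low high]]]].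
  apply: (extrapolation_sufficient s01 mv mu u_bd1 u_cvg th_y).
    by apply/Hnorm_scale_cvg0P => // e; exact: powR_ge0.
  exact/Hnorm_cvg0P.
Qed.
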